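(* Let $H(\mathbb C)$ be the space of entire functions with the topology of locally uniform convergence, identified with the space of sequences $(x(n))_{n\ge0}$ of Taylor coefficients at $0$ and endowed with the Hadamard (coordinatewise) product, and let $D:f\mapsto f'$ be the differentiation operator, i.e. $D(x(0),x(1),x(2),\ldots)=(x(1),2x(2),3x(3),\ldots)$. If $x$ is a frequently hypercyclic vector for $D$, then there exists a natural number $M$ such that $x^m$ is not hypercyclic for $D$ for any $m\ge M$. In particular, $D$ does not have any frequently hypercyclic algebra.
   Context: A vector $x$ is hypercyclic for $T$ if its orbit $\{T^nx:n\ge0\}$ is dense; frequently hypercyclic if for every non-empty open $U$ the set $\{n\in\mathbb N_0:T^nx\in U\}$ has positive lower density $\liminf_{N\to\infty}\frac{\mathrm{card}(A\cap[0,N])}{N+1}$. Powers $x^m$ are taken for the Hadamard product. A frequently hypercyclic algebra is a subalgebra $\ne\{0\}$ all of whose non-zero elements are frequently hypercyclic. *)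

From HB Require Import structures.
From mathcomp Require Import all_boot all_order all_algebra.
From mathcomp Require Import all_classical all_reals all_analysis.
From mathcomp Require Import complex.
Set Implicit Arguments. Unset Strict Implicit. Unset Printing Implicit Defensive.
Import Order.TTheory GRing.Theory Num.Theory.
Import numFieldNormedType.Exports.
Local Open Scope ring_scope.
Local Open Scope complex_scope.

Section EntireSeq.
Variable R : realType.
Local Notation C := ((R[i])^o).

(* An entire function, identified with its sequence of Taylor coefficients at 0:
   the power series converges at every point of C (infinite radius). *)
Definition entire (x : nat -> C) : Prop :=
  forall z : C, cvgn (series (fun k => x k * z ^+ k)).

Definition evalp (x : nat -> C) (z : C) : C :=
  limn (series (fun k => x k * z ^+ k)).

Definition Dop (x : nat -> C) : nat -> C := fun k => x k.+1 *+ k.+1.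

Definition hpow (x : nat -> C) (m : nat) : nat -> C := fun k => x k ^+ m.

(* basic neighbourhood of y for locally uniform convergence:
   u is in N(y, r, eps) iff |u(z) - y(z)| < eps for all |z| <= r *)
Definition in_nbhd (y : nat -> C) (r eps : R) (u : nat -> C) : Prop :=
  forall z : C, `|z| <= r%:C -> `|evalp u z - evalp y z| < eps%:C.

Definition visits (x y : nat -> C) (r eps : R) (n : nat) : Prop :=
  in_nbhd y r eps (iter n Dop x).

(* hypercyclic for D: the orbit meets every non-empty open set of H(C), i.e.
   every basic neighbourhood of every entire function *)
Definition hypercyclic (x : nat -> C) : Prop :=
  forall y : nat -> C, entire y -> forall r eps : R, 0 < r -> 0 < eps ->
    exists n : nat, visits x y r eps n.

Definition pos_lower_density (A : nat -> Prop) : Prop :=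
  exists c : R, 0 < c /\ exists N0 : nat, forall N : nat, (N0 <= N)%N ->
    c <= (\sum_(n < N.+1) (`[< A n >] : nat)%:R) / N.+1%:R.

Definition freq_hypercyclic (x : nat -> C) : Prop :=
  forall y : nat -> C, entire y -> forall r eps : R, 0 < r -> 0 < eps ->
    pos_lower_density (visits x y r eps).

Definition freq_hypercyclic_algebra (S : set (nat -> C)) : Prop :=
  (forall x, S x -> entire x) /\
  S (fun _ => 0) /\
  (forall x y, S x -> S y -> S (fun k => x k + y k)) /\
  (forall (c : C) x, S x -> S (fun k => c * x k)) /\
  (forall x y, S x -> S y -> S (fun k => x k * y k)) /\
  (exists x, S x /\ x <> (fun _ => 0)) /\
  (forall x, S x -> x <> (fun _ => 0) -> freq_hypercyclic x).

End EntireSeq.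

From mathcomp Require Import all_boot all_order all_algebra.
From mathcomp Require Import all_classical all_reals all_analysis.
From mathcomp Require Import complex.
From mathcomp Require Import ring lra zify.
Import Order.TTheory GRing.Theory Num.Theory.
Import numFieldNormedType.Exports.

(* Testing the frequent hypercyclicity of x on the unit ball around 0 gives a set
   of indices n of positive lower density, hence with gaps of bounded ratio q, at
   which D^n x is smaller than 1 on the unit disc. The Cauchy estimates (obtained by
   averaging over roots of unity) turn this into |x(n+k)| (n+k)! <= 3 k!, so for
   every large n there is n' >= n/q with |x(n)| n! <= 3 (n-n')!. The factorial
   (n-n')! is so small compared with n! that |x(n)^m| n! < 1 as soon as m > 8q.
   But x(n)^m n! is the value at 0 of D^n (x^m), which for a hypercyclic x^m must
   approximate arbitrarily large constants. A frequently hypercyclic algebra would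
   contain all the powers of one of its frequently hypercyclic elements. *)

Lemma leq_expn2r {m n} e : m <= n -> m ^ e <= n ^ e.
Proof. by case: e => // e; rewrite leq_exp2r. Qed.

Lemma fact_leq_expnn n : n`! <= n ^ n.
Proof.
elim: n => // n IH; rewrite factS expnS leq_mul //.
exact: leq_trans IH (leq_expn2r _ (leqnSn n)).
Qed.

Lemma expnn_leq_fact_sqr n : n ^ n <= n`! ^ 2.
Proof.
have fact_up : n`! = \prod_(i < n) i.+1 by rewrite fact_prod big_add1 big_mkord.
have fact_down : n`! = \prod_(i < n) (n - i).
  by rewrite fact_up (reindex_inj rev_ord_inj); apply: eq_bigr => i _; rewrite subnSK.
have -> : n ^ n = \prod_(i < n) n by rewrite prod_nat_const card_ord.
rewrite expnS expn1 {1}fact_up fact_down -big_split /=.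
by apply: leq_prod => i _; have := ltn_ord i; nia.
Qed.

Lemma fact_mul_leq_fact_add m n : m`! * n`! <= (m + n)`!.
Proof. by rewrite -(bin_fact (leq_addr n m)) addKn leq_pmull // bin_gt0 leq_addr. Qed.

Lemma three_fact_lt {q n k} : 0 < q -> k < q * n.+1 -> 2 * q + 6 <= n ->
  3 ^ (8 * q + 1) * k`! < n`! ^ (8 * q).
Proof.
move=> q0 kq nq; set M := q * n.+1.
have k_le : k`! <= n ^ (2 * M).
  apply: leq_trans (fact_leq_expnn k) _.
  apply: leq_trans (leq_expn2r _ (ltnW kq)) _.
  apply: leq_trans (leq_pexp2l _ (ltnW kq)) _; first by rewrite muln_gt0 q0.
  rewrite [n ^ _]expnM; apply: leq_expn2r; rewrite /M; nia.
have three_le : 3 ^ (8 * q + 1) <= n ^ (8 * q + 1) by apply: leq_expn2r; lia.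
have n_fact : n ^ (4 * q * n) <= n`! ^ (8 * q).
  have -> : n ^ (4 * q * n) = (n ^ n) ^ (4 * q) by rewrite -expnM mulnC.
  have -> : n`! ^ (8 * q) = (n`! ^ 2) ^ (4 * q) by rewrite -expnM mulnA.
  exact/leq_expn2r/expnn_leq_fact_sqr.
apply: leq_ltn_trans (leq_mul three_le k_le) _; rewrite -expnD.
by apply: leq_trans n_fact; rewrite ltn_exp2l /M; nia.
Qed.

Lemma three_fact_expn_lt {q n k m} : 0 < q -> k < q * n.+1 -> 2 * q + 6 <= n ->
  8 * q + 1 <= m -> 3 ^ m * k`! ^ m < (n + k)`! ^ m.-1.
Proof.
move=> q0 kq nq mq; have [t ->] : exists t, m = (8 * q + t).+1 by exists (m - (8 * q).+1); lia.
set s := 8 * q + t; rewrite [_.-1]/=.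
apply: leq_trans (leq_expn2r _ (fact_mul_leq_fact_add n k)).
have -> : 3 ^ s.+1 * k`! ^ s.+1 = 3 ^ (8 * q + 1) * k`! * (3 ^ t * k`! ^ s).
  by rewrite mulnACA -expnD (expnS k`!); congr (_ ^ _ * _); rewrite /s; lia.
have -> : (n`! * k`!) ^ s = n`! ^ (8 * q) * (n`! ^ t * k`! ^ s).
  by rewrite expnMn {1}/s expnD mulnA.
apply: (@leq_trans (n`! ^ (8 * q) * (3 ^ t * k`! ^ s))).
  by rewrite ltn_pmul2r ?three_fact_lt // muln_gt0 !expn_gt0 fact_gt0.
rewrite leq_mul2l leq_mul2r leq_expn2r ?orbT //.
by apply: leq_trans (fact_geq n); lia.
Qed.

Lemma dvdn_add_subn N k l : k < N -> l < N -> (N %| l + (N - k)) = (l == k).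
Proof.
move=> kN lN; case: eqP => [-> | lk]; first by rewrite subnKC ?dvdnn // ltnW.
apply/negbTE/negP => /dvdnP [q hq].
have : 0 < q < 2 by apply/andP; split; nia.
by case: q hq => [|[|]] //= hq _; apply: lk; lia.
Qed.

Lemma sum_ord_ltn m L : \sum_(n < m) (n < L) = minn m L.
Proof.
elim: m => [|m IH]; first by rewrite big_ord0 min0n.
by rewrite big_ord_recr /= IH; case: (ltnP m L) => /= mL; lia.
Qed.

Local Open Scope ring_scope.
Local Open Scope complex_scope.

Lemma sum_prim_root_expr (F : idomainType) N (w : F) e : N.-primitive_root w ->
  \sum_(j < N) (w ^+ e) ^+ j = if (N %| e)%N then N%:R else 0.
Proof.
move=> pw; case: ifP => Ne.
  have -> : w ^+ e = 1 by rewrite -(prim_expr_mod pw) (eqP Ne) expr0.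
  by under eq_bigr do rewrite expr1n; rewrite sumr_const card_ord.
have we1 : w ^+ e != 1.
  by rewrite -(expr0 w) (eq_prim_root_expr pw) mod0n -/(dvdn N e) Ne.
have := subrX1 (w ^+ e) N; rewrite exprAC (prim_expr_order pw) expr1n subrr.
by move/esym/eqP; rewrite mulf_eq0 subr_eq0 (negbTE we1) => /eqP.
Qed.

(* Averaging over the N-th roots of unity, with weights w^(-jk) written
   w^(j(N-k)), keeps only the coefficients of index congruent to k mod N. *)
Lemma prim_root_sieve (F : numFieldType) N (w : F) (u : nat -> F) k L :
  N.-primitive_root w -> (k < N)%N -> (N <= L)%N ->
  N%:R^-1 * \sum_(j < N) w ^+ (j * (N - k)) * \sum_(0 <= l < L) u l * (w ^+ j) ^+ l
  = u k + \sum_(N <= l < L) u l * (N %| l + (N - k))%N%:R.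
Proof.
move=> pw kN NL; have N0 := prim_order_gt0 pw.
have -> : N%:R^-1 * \sum_(j < N) w ^+ (j * (N - k)) * \sum_(0 <= l < L) u l * (w ^+ j) ^+ l
    = \sum_(0 <= l < L) u l * (N%:R^-1 * \sum_(j < N) (w ^+ (l + (N - k))) ^+ j).
  rewrite mulr_sumr; under eq_bigr do rewrite mulr_sumr mulr_sumr.
  rewrite exchange_big /=; apply: eq_bigr => l _; rewrite !mulr_sumr.
  apply: eq_bigr => j _.
  have -> : (w ^+ (l + (N - k))) ^+ j = w ^+ (j * (N - k)) * (w ^+ j) ^+ l.
    by rewrite -!exprM -exprD addnC -mulnDr mulnC.
  ring.
have NV : N%:R^-1 * N%:R = 1 :> F by rewrite mulVf // pnatr_eq0 -lt0n.
have sieve l : N%:R^-1 * (if (N %| l + (N - k))%N then N%:R else 0)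
               = (N %| l + (N - k))%N%:R :> F.
  by case: (N %| _)%N; rewrite ?NV ?mulr0.
under eq_bigr do rewrite sum_prim_root_expr // sieve.
rewrite (big_cat_nat (leq0n N) NL) /=; congr (_ + _).
rewrite big_mkord (bigD1 (Ordinal kN)) //= dvdn_add_subn // eqxx mulr1 big1 ?addr0 //.
move=> l /negPf lk; rewrite dvdn_add_subn // -val_eqE /= in lk *.
by rewrite lk mulr0.
Qed.

Lemma sum_halfX_le (F : realFieldType) N L :
  \sum_(N <= l < L) (2^-1 : F) ^+ l <= 2 * 2^-1 ^+ N.
Proof.
have half0 : (0 : F) <= 2^-1 by rewrite invr_ge0 ler0n.
have := exprn_ge0 N half0; have := exprn_ge0 L half0.
case: (leqP N L) => NL; last by rewrite big_geq ?(ltnW NL); lra.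
rewrite (telescope_sumr_eq (fun l => - (2 * (2^-1 : F) ^+ l)) _ NL); first by lra.
by move=> l _; rewrite exprS; field.
Qed.

Section Entire.
Variable R : realType.
Local Notation C := ((R[i])^o).
Local Notation normc := (@Normc.normc R).
Local Notation D := (@Dop R).

Lemma normr_normc (z : R[i]) : `|z| = (normc z)%:C.
Proof. by rewrite normc_def; case: z. Qed.

Lemma normr_realc (r : R) : `|r%:C| = `|r|%:C.
Proof. by rewrite normc_def /= expr0n /= addr0 sqrtr_sqr. Qed.

Lemma normc_ge0 (z : R[i]) : 0 <= normc z.
Proof. by have := normr_ge0 z; rewrite normr_normc ler0c. Qed.

Lemma normcX (z : R[i]) k : normc (z ^+ k) = normc z ^+ k.
Proof. by apply: complexI; rewrite -normr_normc normrX normr_normc rmorphXn. Qed.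

Lemma normc_Re (z : R[i]) : `|complex.Re z| <= normc z.
Proof. by have := normc_ge_Re z; rewrite normr_normc lecR. Qed.

Lemma normc_Im (z : R[i]) : `|complex.Im z| <= normc z.
Proof.
have normci : normc 'i = 1 by rewrite /Normc.normc /= expr0n add0r expr1n sqrtr1.
by have := normc_Re (z * 'i); rewrite ReiNIm normrN Normc.normcM normci mulr1.
Qed.

Lemma Re_series (v : nat -> C) n :
  complex.Re (series v n) = series (fun k => complex.Re (v k)) n.
Proof.
elim: n => [|n IH]; first by rewrite /series /= !big_geq.
by rewrite !seriesSr -IH; case: (series v n) => ? ?; case: (v n).
Qed.

Lemma Im_series (v : nat -> C) n :
  complex.Im (series v n) = series (fun k => complex.Im (v k)) n.
Proof.
elim: n => [|n IH]; first by rewrite /series /= !big_geq.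
by rewrite !seriesSr -IH; case: (series v n) => ? ?; case: (v n).
Qed.

Lemma cvg_real_complex {u : R^nat} {a : R} :
  (u @ \oo --> a)%classic -> ((fun n => (u n)%:C : C) @ \oo --> (a%:C : C))%classic.
Proof.
move=> ua; apply/cvgrPdist_lt => e e0.
have er : e \is Num.real by apply: gtr0_real.
have e'0 : 0 < complex.Re e by rewrite -ltcR RRe_real.
near=> n; rewrite -rmorphB normr_realc -(RRe_real er) ltcR.
by near: n; apply: cvgr_dist_lt.
Unshelve. all: by end_near.
Qed.

Lemma cvg_series_normc_le (v : nat -> C) (a : R^nat) :
  (forall k, normc (v k) <= a k) -> cvgn (series a) -> cvgn (series v).
Proof.
move=> va ca.
have a0 k : 0 <= a k := le_trans (normc_ge0 _) (va k).
have cvg_part (f : R[i] -> R) : (forall z, `|f z| <= normc z) ->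
    cvgn (series (fun k => f (v k))).
  move=> fn; apply: normed_cvg; apply: series_le_cvg ca => k //=.
  exact: le_trans (fn _) (va k).
have cre := cvg_part _ normc_Re; have cim := cvg_part _ normc_Im.
have -> : series v = fun n => (series (fun k => complex.Re (v k)) n)%:C +
                                'i * (series (fun k => complex.Im (v k)) n)%:C.
  by apply/funext => n; rewrite [LHS]complexE Re_series Im_series.
apply: is_cvgD; first exact: cvgP (cvg_real_complex cre).
by apply: is_cvgMl_tmp; apply: cvgP (cvg_real_complex cim).
Qed.

Definition rapid_decay (u : nat -> C) : Prop :=
  forall rho : R, 0 < rho -> exists B : R, forall l, normc (u l) * rho ^+ l <= B.

Lemma entire_rapid_decay (u : nat -> C) : entire u -> rapid_decay u.
Proof.
move=> eu rho rho0.
have [M [Mreal HM]] := cvg_seq_bounded (cvgP _ (cvg_series_cvg_0 (eu rho%:C))).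
have M1real : M + 1 \is Num.real by rewrite realD // real1.
exists (complex.Re (M + 1)) => l.
have /= := HM (M + 1) ltac:(by rewrite ltrDl ltr01) l I.
rewrite normrM normrX normr_realc (ger0_norm (ltW rho0)) normr_normc.
by rewrite -rmorphXn -rmorphM -{1}(RRe_real M1real) lecR.
Qed.

Lemma rapid_decay_entire (u : nat -> C) : rapid_decay u -> entire u.
Proof.
move=> du z; have z0 := normc_ge0 z.
have [B hB] := du (2 * normc z + 1) ltac:(lra).
apply: (@cvg_series_normc_le _ (geometric B (2^-1))).
- move=> k; rewrite Normc.normcM normcX /=.
  apply: le_trans (_ : normc (u k) * (2 * normc z + 1) ^+ k * 2^-1 ^+ k <= _); last first.
    by rewrite ler_wpM2r // exprn_ge0 // invr_ge0 ler0n.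
  rewrite -mulrA ler_wpM2l ?normc_ge0 // -exprMn.
  by rewrite lerXn2r ?nnegrE ?mulr_ge0 ?invr_ge0 ?ler0n //; lra.
- apply: is_cvg_geometric_series; rewrite ger0_norm ?invr_ge0 ?ler0n //.
  by rewrite invf_lt1 // ltr1n.
Qed.

Lemma entireP (u : nat -> C) : entire u <-> rapid_decay u.
Proof. by split; [exact: entire_rapid_decay | exact: rapid_decay_entire]. Qed.

Lemma rapid_decay_Dop (u : nat -> C) : rapid_decay u -> rapid_decay (D u).
Proof.
move=> du rho rho0; have [B hB] := du (2 * rho) (mulr_gt0 (ltr0n _ 2) rho0).
exists (B / rho) => l; rewrite /Dop normcMn ler_pdivlMr //.
apply: le_trans (hB l.+1).
have l2 : (l.+1%:R : R) <= 2 ^+ l.+1 by rewrite -natrX ler_nat ltnW // ltn_expl.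
have := mulr_ge0 (mulr_ge0 (normc_ge0 (u l.+1)) (exprn_ge0 l (ltW rho0))) (ltW rho0).
set a := normc _; rewrite exprMn (exprSr rho l) -(mulr_natr a); set p := rho ^+ l.
by move=> ?; nra.
Qed.

Lemma entire_iter_Dop n (u : nat -> C) : entire u -> entire (iter n D u).
Proof.
by move=> /entireP du; apply/entireP; elim: n => // n IH; apply: rapid_decay_Dop.
Qed.

Lemma iter_DopE n (u : nat -> C) k :
  iter n D u k *+ k`! = u (n + k)%N *+ (n + k)`!.
Proof. by elim: n k => // n IH k; rewrite iterS /Dop -mulrnA -factS IH addSnnS. Qed.

Lemma evalp_at0 (u : nat -> C) : evalp u 0 = u 0%N.
Proof.
apply: lim_near_cst; first exact: norm_hausdorff.
near=> N; have /prednK <- : (0 < N)%N by near: N; exact: nbhs_infty_gt.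
rewrite /series /= big_nat_recl // expr0 mulr1 big1 ?addr0 // => i _.
by rewrite expr0n mulr0.
Unshelve. all: by end_near.
Qed.

Lemma evalp0 (z : C) : evalp (fun=> 0) z = 0.
Proof.
apply: lim_near_cst; first exact: norm_hausdorff.
by near=> N; rewrite /series /= big1 // => i _; rewrite mul0r.
Unshelve. all: by end_near.
Qed.

Fixpoint dyadic_root (p : nat) : R[i] := if p is p'.+1 then sqrtc (dyadic_root p') else -1.

Lemma dyadic_root_prim p : (2 ^ p.+1).-primitive_root (dyadic_root p).
Proof.
have rootN1 : dyadic_root p ^+ (2 ^ p) = -1.
  by elim: p => //= p IH; rewrite expnS exprM sqr_sqrtc.
have root1 : dyadic_root p ^+ (2 ^ p.+1) = 1.
  by rewrite expnS mulnC exprM rootN1 sqrrN expr1n.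
have [m pm /(dvdn_pfactor _ _ (isT : prime 2)) [e]] :=
  prim_order_exists (expn_gt0 2 p.+1) root1.
rewrite leq_eqVlt ltnS => /predU1P [-> <- //|le_ep] me.
have : (-1 : R[i]) != 1 by rewrite -subr_eq0 -opprD oppr_eq0 (_ : 1 + 1 = 2%:R) // pnatr_eq0.
rewrite -rootN1 -(prim_expr_mod pm) me.
have /eqP -> : (2 ^ p %% 2 ^ e == 0)%N by rewrite -/(dvdn _ _) dvdn_exp2l.
by rewrite expr0 eqxx.
Qed.

Lemma normc_prim_root {N} {w : R[i]} : N.-primitive_root w -> normc w = 1.
Proof.
move=> pw; apply/eqP; rewrite -(pexpr_eq1 (prim_order_gt0 pw) (normc_ge0 w)).
by rewrite -normcX (prim_expr_order pw) Normc.normc1.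
Qed.

Lemma coef_le_partial_sums (u : nat -> C) (M : C) (B : R) N (w : C) k L :
  (forall l, normc (u l) * 2 ^+ l <= B) -> 2 * B < 2 ^+ N ->
  N.-primitive_root w -> (k < N)%N -> (N <= L)%N ->
  (forall j : 'I_N, `|series (fun l => u l * (w ^+ j) ^+ l) L| <= M + 1) ->
  `|u k| <= M + 2.
Proof.
move=> uB BN pw kN NL uS; have N0 := prim_order_gt0 pw.
have := @prim_root_sieve _ N w u k L pw kN NL; set T := _ * _; set tail := \sum_(_ <= _ < _) _.
move=> /esym /(canRL (addrK _)) ->.
have T_le : `|T| <= M + 1.
  rewrite normrM normfV normr_nat ler_pdivrMl ?ltr0n //.
  apply: le_trans (ler_norm_sum _ _ _) _.
  apply: le_trans (_ : \sum_(j < N) (M + 1) <= _); last first.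
    by rewrite sumr_const card_ord mulr_natl.
  apply: ler_sum => j _; rewrite normrM normrX normr_normc (normc_prim_root pw) expr1n mul1r.
  exact: uS.
have tail_le : `|tail| <= 1.
  apply: le_trans (ler_norm_sum _ _ _) _.
  apply: le_trans (_ : \sum_(N <= l < L) (B * 2^-1 ^+ l)%:C <= _).
    apply: ler_sum => l _; rewrite normrM.
    have : `|u l| <= (B * 2^-1 ^+ l)%:C.
      by rewrite normr_normc lecR exprVn ler_pdivlMr ?exprn_gt0 ?ltr0n.
    by case: (_ %| _)%N; rewrite ?normr1 ?normr0 ?mulr1 ?mulr0 // => /(le_trans (normr_ge0 _)).
  rewrite -rmorph_sum -mulr_sumr (_ : 1 = 1%:C) // lecR.
  have B0 : 0 <= B by apply: le_trans (uB 0%N); rewrite mulr_ge0 ?normc_ge0 ?exprn_ge0.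
  apply: le_trans (ler_wpM2l B0 (sum_halfX_le _ N L)) _.
  by rewrite mulrA exprVn ler_pdivrMr ?exprn_gt0 // mul1r mulrC ltW.
apply: le_trans (ler_normB _ _) _; apply: le_trans (lerD T_le tail_le) _.
by rewrite -addrA (_ : 1 + 1 = 2).
Qed.

Lemma cauchy_coef_le (u : nat -> C) (M : C) : entire u ->
  (forall z : C, normc z <= 1 -> `|evalp u z| <= M) -> forall k, `|u k| <= M + 2.
Proof.
move=> eu uM k; have [B uB] := entire_rapid_decay _ eu 2 (ltr0n _ 2).
pose p := (Num.Def.archi_bound (2 * B) + k)%N; pose N := (2 ^ p.+1)%N.
have pN : (p < N)%N by apply: ltn_trans (ltnSn p) (ltn_expl p.+1 (isT : (1 < 2)%N)).
have kN : (k < N)%N by apply: leq_ltn_trans pN; rewrite leq_addl.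
have BN : 2 * B < 2 ^+ N.
  by apply: upper_nthrootP; apply: ltnW; apply: leq_ltn_trans pN; rewrite leq_addr.
have pw := dyadic_root_prim p; set w := dyadic_root p in pw.
have near_S : \forall L \near \oo%classic, forall j : 'I_N,
    `|evalp u (w ^+ j) - series (fun l => u l * (w ^+ j) ^+ l) L| < 1.
  by apply: filter_forall => j; apply: cvgr_dist_lt.
have [L [NL SL]] : exists L, (N <= L)%N /\ forall j : 'I_N,
    `|evalp u (w ^+ j) - series (fun l => u l * (w ^+ j) ^+ l) L| < 1.
  by near \oo%classic => L; exists L; split; near: L; [exact: nbhs_infty_ge | exact: near_S].
apply: (@coef_le_partial_sums u M B N w k L uB BN pw kN NL) => j.
have wj1 : normc (w ^+ j) <= 1 by rewrite normcX (normc_prim_root pw) expr1n.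
rewrite -[series _ L](subKr (evalp u (w ^+ j))).
exact: le_trans (ler_normB _ _) (lerD (uM _ wj1) (ltW (SL j))).
Unshelve. all: by end_near.
Qed.

Lemma pos_lower_density_gaps (A : nat -> Prop) : pos_lower_density R A ->
  exists q N0, (0 < q)%N /\ forall j, (N0 <= j)%N ->
    exists n, [/\ A n, (j.+1 %/ q <= n)%N & (n <= j)%N].
Proof.
case=> c [c0 [N0 dens]]; pose q := Num.Def.archi_bound c^-1.
have cq : c^-1 < q%:R by apply: archi_boundP; rewrite invr_ge0 ltW.
have q0 : (0 < q)%N by rewrite -(ltr0n R); apply: lt_trans cq; rewrite invr_gt0.
exists q, N0; split => // j jN0.
apply: contrapT => no_visit; set L := (j.+1 %/ q)%N.
have sum_le : \sum_(n < j.+1) (`[< A n >] : nat)%:R <= L%:R :> R.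
  rewrite -natr_sum ler_nat; apply: leq_trans (geq_minr j.+1 L).
  rewrite -sum_ord_ltn leq_sum // => n _; case: (asboolP (A n)) => //= An.
  rewrite lt0b ltnNge; apply/negP => Ln; apply: no_visit.
  by exists n; split=> //; rewrite -ltnS ltn_ord.
have q0' : (0 : R) < q%:R by rewrite ltr0n.
have L_le : L%:R / j.+1%:R <= q%:R^-1 :> R.
  by rewrite ler_pdivrMr // mulrC ler_pdivlMr // -natrM ler_nat leq_divM.
have qc : q%:R^-1 < c by rewrite -[c]invrK ltf_pV2 ?posrE ?invr_gt0.
have j0 : (0 : R) <= j.+1%:R^-1 by rewrite invr_ge0.
have := le_trans (le_trans (dens j jN0) (ler_wpM2r j0 sum_le)) L_le.
by move=> /(lt_le_trans qc); rewrite ltxx.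
Qed.

Lemma entire_cst (w : C) : entire (fun k => if k == 0%N then w else 0).
Proof.
apply/entireP => rho _; exists (normc w) => -[|l]; first by rewrite expr0 mulr1.
by rewrite Normc.normc0 mul0r normc_ge0.
Qed.

Lemma entire0 : entire (fun=> 0 : C).
Proof.
by apply/entireP => rho _; exists 0 => l; rewrite Normc.normc0 mul0r.
Qed.

Lemma freq_hypercyclic_hypercyclic (x : nat -> C) : freq_hypercyclic x -> hypercyclic x.
Proof.
move=> fx y ey r eps r0 eps0; have [c [c0 [N0 dens]]] := fx y ey r eps r0 eps0.
apply: contrapT => no_visit; have := dens N0 (leqnn N0).
rewrite big1 ?mul0r => [|n _]; first by rewrite leNgt c0.
by rewrite asboolF // => vn; apply: no_visit; exists n.
Qed.

Lemma visits0_coef_le {x : nat -> C} {n} k : entire x -> visits x (fun=> 0) 1 1 n ->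
  normc (x (n + k)%N) * (n + k)`!%:R <= 3 * k`!%:R.
Proof.
move=> ex vn.
have iter_le : normc (iter n D x k) <= 3.
  have := cauchy_coef_le _ 1 (entire_iter_Dop n _ ex) _ k.
  rewrite normr_normc (_ : 1 + 2 = (3 : R)%:C) ?lecR; last first.
    by rewrite (natrD R 1 2) rmorphD rmorph1 rmorph_nat.
  apply => z z1; apply/ltW; have := vn z; rewrite evalp0 subr0; apply.
  by rewrite normr_normc lecR.
rewrite (mulr_natr (normc _)) -normcMn -iter_DopE normcMn -[_ *+ k`!]mulr_natr.
exact: ler_wpM2r.
Qed.

Lemma hypercyclic_coef_gt1 (u : nat -> C) N : hypercyclic u ->
  exists2 n, (N <= n)%N & 1 < normc (u n *+ n`!).
Proof.
move=> hu; pose s := \sum_(i < N) normc (u i *+ i`!).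
have s0 : 0 <= s by apply: sumr_ge0 => i _; apply: normc_ge0.
pose w : C := (s + 2)%:C.
have [n vn] := hu _ (entire_cst w) 1 1 ltr01 ltr01.
have := vn 0; rewrite normr0 ler0c ler01 !evalp_at0 /=.
have := iter_DopE n u 0; rewrite addn0 mulr1n => -> /(_ isT).
rewrite normr_normc ltcR => near_w.
have w_le : s + 2 <= normc (u n *+ n`! - w) + normc (u n *+ n`!).
  rewrite -normcN opprB; have := le_normcD (w - u n *+ n`!) (u n *+ n`!).
  by rewrite subrK /w /Normc.normc /= expr0n addr0 sqrtr_sqr ger0_norm ?addr_ge0.
exists n; last by lra.
rewrite leqNgt; apply/negP => nN.
have : normc (u n *+ n`!) <= s.
  rewrite /s (bigD1 (Ordinal nN)) //= lerDl.
  by apply: sumr_ge0 => i _; apply: normc_ge0.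
lra.
Qed.

Lemma freq_hypercyclic_hpow_coef_lt1 {x : nat -> C} : entire x -> freq_hypercyclic x ->
  exists M N, forall m n, (M <= m)%N -> (N <= n)%N -> normc (hpow x m n *+ n`!) < 1.
Proof.
move=> ex fx.
have [q [N0 [q0 gaps]]] := pos_lower_density_gaps _ (fx _ entire0 1 1 ltr01 ltr01).
exists (8 * q + 1)%N, (N0 + q * (2 * q + 7))%N => m n qm nN.
have [n' [vn' n'_ge n'_le]] := gaps n (leq_trans (leq_addr _ _) nN).
set k := (n - n')%N; have nk : n = (n' + k)%N by rewrite subnKC.
have kq : (k < q * n'.+1)%N.
  by have := ltn_ceil n.+1 q0; have := leq_mul n'_ge (leqnn q); rewrite /k; nia.
have nq : (2 * q + 6 <= n')%N.
  by apply: leq_trans n'_ge; rewrite leq_divRL //; nia.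
have := three_fact_expn_lt q0 kq nq qm; rewrite -nk => fact_lt.
have := visits0_coef_le k ex vn'; rewrite -nk => x_le.
have F0 : (0 : R) < (n`! ^ m.-1)%:R by rewrite ltr0n expn_gt0 fact_gt0.
rewrite -(ltr_pM2r F0) mul1r normcMn normcX -(mulr_natr (_ ^+ m)) -mulrA -natrM -expnS.
rewrite prednK; last by apply: leq_trans qm; rewrite addn1.
apply: le_lt_trans (_ : (3 ^ m * k`! ^ m)%:R < _); last by rewrite ltr_nat.
rewrite natrX -exprMn natrM !natrX -exprMn lerXn2r ?nnegrE ?mulr_ge0 ?normc_ge0 //.
Qed.

Lemma freq_hypercyclic_hpow_not_hypercyclic {x : nat -> C} : entire x -> freq_hypercyclic x ->
  exists M, forall m, (M <= m)%N -> ~ hypercyclic (hpow x m).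
Proof.
move=> ex fx; have [M [N coef_lt1]] := freq_hypercyclic_hpow_coef_lt1 ex fx.
exists M => m Mm /(hypercyclic_coef_gt1 _ N) [n Nn].
by rewrite ltNge (ltW (coef_lt1 m n Mm Nn)).
Qed.

Lemma no_freq_hypercyclic_algebra : ~ exists S, @freq_hypercyclic_algebra R S.
Proof.
move=> [S [Sentire [_ [_ [_ [Smul [[x [Sx x_neq0]] Sfhc]]]]]]].
have [M hM] := freq_hypercyclic_hpow_not_hypercyclic (Sentire x Sx) (Sfhc x Sx x_neq0).
have hpow1 : hpow x 1 = x by apply/funext => k; rewrite /hpow expr1.
have hpowS m : hpow x m.+1 = (fun k => x k * hpow x m k).
  by apply/funext => k; rewrite /hpow exprS.
have Spow m : S (hpow x m.+1) by elim: m => [|m IH]; rewrite ?hpow1 // hpowS; apply: Smul.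
have xM_neq0 : hpow x M.+1 <> (fun=> 0).
  move=> xM0; apply: x_neq0; apply/funext => k.
  by have /eqP := congr1 (fun f => f k) xM0; rewrite /hpow expf_eq0 => /andP [_ /eqP].
exact/(hM M.+1 (leqnSn M))/freq_hypercyclic_hypercyclic/Sfhc.
Qed.

End Entire.

Theorem proposition3p1 (R : realType) :
  (forall x : nat -> R[i], entire x -> freq_hypercyclic x ->
     exists M : nat, forall m : nat, (M <= m)%N -> ~ hypercyclic (hpow x m))
  /\ ~ (exists S : set (nat -> R[i]), freq_hypercyclic_algebra S).
Proof.
split; [exact: freq_hypercyclic_hpow_not_hypercyclic | exact: no_freq_hypercyclic_algebra].
Qed.
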